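(* The map $a\mapsto(a,\,a\bar a^* )$ induces an isomorphism of algebraic groups over $\mathbf Q$ $$E_0^\times/F^\times\;\xrightarrow{\ \sim\ }\;H_{\mathbf z}.$$
   Context: $D_0$ is a definite quaternion algebra over $\mathbf Q$ with main involution $*$; $F=\mathbf Q(\sqrt{d_F})$ is a quadratic étale algebra ($d_F$ a square-free positive integer, with $d_F=1$ meaning $F=\mathbf Q\oplus\mathbf Q$) with nontrivial automorphism $x\mapsto\bar x$; $D=D_0\otimes_{\mathbf Q}F$ with $*$ and $\bar{\ }$ extended; $V=\{x\in D:\bar x^*=x\}$; $H(\mathbf Q)=(D^\times\times\mathbf Q^\times)/\{(a,N_{F/\mathbf Q}(a)):a\in F^\times\}$ acts on $V$ by $\varrho(a,\alpha)x=\alpha^{-1}ax\bar a^*$, with similitude $\nu=\alpha^{-2}N_{F/\mathbf Q}(aa^* )$, and $H^{(1)}=\ker\nu$. $M=\mathbf Q(\sqrt{-d_M})$ is an imaginary quadratic field ($d_M$ square-free positive) with an embedding $\iota:M\hookrightarrow D_0$. $K=\mathbf Q(\sqrt{-d_Md_F})$, embedded in $V$ by $\iota(\sqrt{-d_Md_F})=\iota(\sqrt{-d_M})\otimes\sqrt{d_F}$. With $-d_K$ the square-free integer such that $K=\mathbf Q(\sqrt{-d_K})$, put $\delta=\sqrt{-d_K}$ if $-d_K\not\equiv1\pmod 4$ and $\delta=\frac{1+\sqrt{-d_K}}{2}$ otherwise; $\mathbf z=(1,\iota(\delta))\in V\oplus V$. $E=F\cdot\iota(M)\subset D$ (the subalgebra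 generated by $F$ and $\iota(M)$), $N_{E/K}(a)=a\bar a^*$, $E_0=\{a\in E:a\bar a^*\in\mathbf Q\}$ (as an algebraic group, $E_0^\times$ is the group of units $a$ of $E$ with $a\bar a^*$ in $\mathbf G_m$), and $H_{\mathbf z}=\{h\in H^{(1)}:\varrho(h)\mathbf z=\mathbf z\}$ with $\varrho$ acting componentwise. *)

From HB Require Import structures.
From mathcomp Require Import all_boot all_order all_algebra.
Set Implicit Arguments. Unset Strict Implicit. Unset Printing Implicit Defensive.
Import Order.TTheory GRing.Theory Num.Theory.
Local Open Scope ring_scope.

Definition squarefree (n : nat) : Prop :=
  (0 < n)%N /\ forall p : nat, prime p -> ~~ (p * p %| n)%N.

(* Quaternion algebra (a,b)_L with basis 1,i,j,k: i^2=a, j^2=b, k=ij=-ji. *)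
Record quat (L : Type) := Quat { q0 : L; q1 : L; q2 : L; q3 : L }.

Definition qmap (L : unitRingType) (x : quat rat) : quat L :=
  Quat (ratr (q0 x)) (ratr (q1 x)) (ratr (q2 x)) (ratr (q3 x)).

Section Algebras.
Variable L : fieldType.
(* qa, qb : structure constants of D_0; dF : d_F; mu : iota(sqrt(-d_M)) *)
Variables (qa qb dF : L) (mu : quat L).

Definition qadd (x y : quat L) : quat L :=
  Quat (q0 x + q0 y) (q1 x + q1 y) (q2 x + q2 y) (q3 x + q3 y).
Definition qscal (c : L) (x : quat L) : quat L :=
  Quat (c * q0 x) (c * q1 x) (c * q2 x) (c * q3 x).
Definition qopp (x : quat L) : quat L := qscal (-1) x.
Definition qone : quat L := Quat 1 0 0 0.
Definition qzero : quat L := Quat 0 0 0 0.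
Definition qmul (x y : quat L) : quat L :=
  Quat (q0 x * q0 y + qa * q1 x * q1 y + qb * q2 x * q2 y - qa * qb * q3 x * q3 y)
       (q0 x * q1 y + q1 x * q0 y - qb * q2 x * q3 y + qb * q3 x * q2 y)
       (q0 x * q2 y + q2 x * q0 y + qa * q1 x * q3 y - qa * q3 x * q1 y)
       (q0 x * q3 y + q3 x * q0 y + q1 x * q2 y - q2 x * q1 y).
Definition qconj (x : quat L) : quat L := Quat (q0 x) (- q1 x) (- q2 x) (- q3 x).

(* D_L = D_0 (x) F (x) L : elements x + y s, s^2 = d_F central. *)
Record dq := DQ { dre : quat L; dim : quat L }.

Definition dadd (x y : dq) : dq := DQ (qadd (dre x) (dre y)) (qadd (dim x) (dim y)).
Definition dmul (x y : dq) : dq :=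
  DQ (qadd (qmul (dre x) (dre y)) (qscal dF (qmul (dim x) (dim y))))
     (qadd (qmul (dre x) (dim y)) (qmul (dim x) (dre y))).
Definition dscal (c : L) : dq := DQ (Quat c 0 0 0) qzero.
Definition dsmul (c : L) (x : dq) : dq := DQ (qscal c (dre x)) (qscal c (dim x)).
Definition done : dq := dscal 1.
Definition dstar (x : dq) : dq := DQ (qconj (dre x)) (qconj (dim x)).
(* x |-> \bar x  (nontrivial automorphism of F extended) *)
Definition dbar (x : dq) : dq := DQ (dre x) (qopp (dim x)).
Definition dbarstar (x : dq) : dq := dbar (dstar x).
(* element u + v sqrt(d_F) of F (x) L *)
Definition fel (u v : L) : dq := DQ (Quat u 0 0 0) (Quat v 0 0 0).
Definition normF (u v : L) : L := u ^+ 2 - dF * v ^+ 2.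

Definition dunit (g : dq) : Prop := exists h, dmul g h = done /\ dmul h g = done.

(* reduced norm g g^* in F (x) L, as coordinates (u,v) of u + v sqrt(d_F) *)
Definition nrd_u (g : dq) : L := q0 (dre (dmul g (dstar g))).
Definition nrd_v (g : dq) : L := q0 (dim (dmul g (dstar g))).

(* representatives (g, alpha) of H(L) = (D_L^x * L^x) / F_L^x *)
Definition Hrep_ok (h : dq * L) : Prop := dunit h.1 /\ h.2 != 0.
(* equality in H(L): (g',a') = (t g, N(t) a) for some t in F_L^x *)
Definition Hequiv (h h' : dq * L) : Prop :=
  exists u v, normF u v != 0 /\ h'.1 = dmul (fel u v) h.1 /\ h'.2 = normF u v * h.2.
Definition nu (h : dq * L) : L := h.2 ^- 2 * normF (nrd_u h.1) (nrd_v h.1).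
Definition rho (h : dq * L) (x : dq) : dq :=
  dsmul (h.2)^-1 (dmul (dmul h.1 x) (dbarstar h.1)).

(* E = F . iota(M) *)
Definition inE (g : dq) : Prop :=
  exists u1 v1 u2 v2, g = dadd (fel u1 v1) (dmul (fel u2 v2) (DQ mu qzero)).
Definition E0x (g : dq) : Prop :=
  inE g /\ (exists h, inE h /\ dmul g h = done /\ dmul h g = done) /\
  (exists c : L, c != 0 /\ dmul g (dbarstar g) = dscal c).
Definition Nalpha (g : dq) : L := q0 (dre (dmul g (dbarstar g))).

End Algebras.

(* iota(sqrt(-d_K)) = c^-1 iota(sqrt(-d_M)) (x) sqrt(d_F), where d_M d_F = c^2 d_K *)
Definition iota_sqrtdK (L : fieldType) (c : nat) (mu : quat L) : dq L :=
  DQ (qzero L) (qscal (c%:R)^-1 mu).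
Definition iota_delta (L : fieldType) (dK c : nat) (mu : quat L) : dq L :=
  if (dK %% 4 == 3)%N   (* -d_K = 1 mod 4 *)
  then dsmul (2%:R)^-1 (dadd (done L) (iota_sqrtdK c mu))
  else iota_sqrtdK c mu.

Definition Hz (L : fieldType) (qa qb dF : L) (dK c : nat) (mu : quat L) (h : dq L * L) : Prop :=
  Hrep_ok qa qb dF h /\ nu qa qb dF h = 1 /\
  rho qa qb dF h (done L) = done L /\
  rho qa qb dF h (iota_delta dK c mu) = iota_delta dK c mu.

From Pilot Require Import Defs.
From HB Require Import structures.
From mathcomp Require Import all_boot all_order all_algebra.
From mathcomp Require Import ring lra.
Set Implicit Arguments. Unset Strict Implicit. Unset Printing Implicit Defensive.
Import Order.TTheory GRing.Theory Num.Theory.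
Local Open Scope ring_scope.

(* mu = iota(sqrt(-d_M)) squares to the negative rational -d_M, so it is a
   nonzero pure quaternion, and iota(delta) = w1 + w4 mu sqrt(d_F) with w4 <> 0.
   Comparing coordinates, every element of D commuting with such an element lies
   in E = F(mu).  If (g, alpha) fixes 1 then g \bar g^* = alpha, hence
   \bar g^* = alpha g^-1, and (g, alpha) fixes iota(delta) iff g commutes with
   it; this gives surjectivity.  Conversely, for g in E_0^x the scalar
   alpha = g \bar g^* makes (g, alpha) fix 1 and, E being commutative,
   iota(delta); its similitude alpha^-2 N_F(g g^* ) is 1.  Injectivity modulo F^x
   is built into H = (D^x x Q^x) / F^x. *)

Lemma dq_eq (L : fieldType) (x y : dq L) :
  q0 (dre x) = q0 (dre y) -> q1 (dre x) = q1 (dre y) ->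
  q2 (dre x) = q2 (dre y) -> q3 (dre x) = q3 (dre y) ->
  q0 (Defs.dim x) = q0 (Defs.dim y) -> q1 (Defs.dim x) = q1 (Defs.dim y) ->
  q2 (Defs.dim x) = q2 (Defs.dim y) -> q3 (Defs.dim x) = q3 (Defs.dim y) ->
  x = y.
Proof.
by case: x => [[????] [????]]; case: y => [[????] [????]] /= -> -> -> -> -> -> -> ->.
Qed.

Ltac dq_ring := apply: dq_eq => /=; ring.
Ltac dq_case x := case: x => [[????] [????]].

Lemma scaled_sub_eq (L : fieldType) (k x y A B : L) :
  k != 0 -> A = B -> k * (x - y) = A - B -> x = y.
Proof.
move=> k_nz -> /eqP; rewrite subrr mulf_eq0 (negbTE k_nz) subr_eq0.
exact: eqP.
Qed.

Lemma colinear_of_cross_eq (L : fieldType) (m1 m2 m3 a1 a2 a3 : L) :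
  [|| m1 != 0, m2 != 0 | m3 != 0] ->
  a1 * m2 = a2 * m1 -> a1 * m3 = a3 * m1 -> a3 * m2 = a2 * m3 ->
  exists t, [/\ a1 = t * m1, a2 = t * m2 & a3 = t * m3].
Proof.
move=> m_nz P12 P13 P32; case/or3P: m_nz => mi_nz.
- exists (a1 / m1); split; first by rewrite divfK.
  + by rewrite mulrAC P12 mulfK.
  + by rewrite mulrAC P13 mulfK.
- exists (a2 / m2); split; last 2 [by rewrite divfK].
  + by rewrite mulrAC -P12 mulfK.
  + by rewrite mulrAC -P32 mulfK.
- exists (a3 / m3); split; last by rewrite divfK.
  + by rewrite mulrAC -P13 mulfK.
  + by rewrite mulrAC P32 mulfK.
Qed.

Section QuaternionAlgebra.
Variables (L : fieldType) (qa qb f : L).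
Implicit Types (x y z g h : dq L) (c u v : L).
Local Notation dm := (dmul qa qb f).
Local Notation dnorm x := (dm x (dbarstar x)).

Lemma muldA x y z : dm x (dm y z) = dm (dm x y) z.
Proof. dq_case x; dq_case y; dq_case z; dq_ring. Qed.

Lemma mul1d x : dm (done L) x = x.
Proof. dq_case x; dq_ring. Qed.

Lemma muld1 x : dm x (done L) = x.
Proof. dq_case x; dq_ring. Qed.

Lemma dbarstarM x y : dbarstar (dm x y) = dm (dbarstar y) (dbarstar x).
Proof. dq_case x; dq_case y; dq_ring. Qed.

Lemma dsmulAl c x y : dm (dsmul c x) y = dsmul c (dm x y).
Proof. dq_case x; dq_case y; dq_ring. Qed.

Lemma muld_dscal c x : dm x (dscal c) = dsmul c x.
Proof. dq_case x; dq_ring. Qed.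

Lemma dsmul_done c : dsmul c (done L) = dscal c.
Proof. dq_ring. Qed.

Lemma dsmul_dscal c u : dsmul c (dscal u) = dscal (c * u).
Proof. dq_ring. Qed.

Lemma dsmulK c : c != 0 -> cancel (dsmul c) (dsmul c^-1).
Proof. by move=> c_nz x; dq_case x; apply: dq_eq => /=; rewrite !mulrA mulVf ?mul1r. Qed.

Lemma dsmulVK c : c != 0 -> cancel (dsmul c^-1) (dsmul c).
Proof. by move=> c_nz x; dq_case x; apply: dq_eq => /=; rewrite !mulrA mulfV ?mul1r. Qed.

Lemma commute_inv g g' t : dm g g' = done L -> dm g' g = done L ->
  dm g t = dm t g -> dm g' t = dm t g'.
Proof.
move=> gg' g'g gt.
have -> : dm g' t = dm (dm g' t) (dm g g') by rewrite gg' muld1.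
by rewrite muldA -(muldA g' t g) -gt muldA g'g mul1d.
Qed.

Lemma Nalpha_dscal g c : dnorm g = dscal c -> Nalpha qa qb f g = c.
Proof. by rewrite /Nalpha => ->. Qed.

Lemma dnormM_dscal g g' c c' : dnorm g = dscal c -> dnorm g' = dscal c' ->
  dnorm (dm g g') = dscal (c * c').
Proof.
move=> ng ng'.
by rewrite dbarstarM muldA -(muldA g g') ng' muld_dscal dsmulAl ng dsmul_dscal mulrC.
Qed.

Lemma dnorm_felM u v x : dnorm (dm (fel u v) x) = dsmul (normF f u v) (dnorm x).
Proof. dq_case x; rewrite /normF; dq_ring. Qed.

Lemma Hequiv_phiP g g' :
  Hequiv qa qb f (g, Nalpha qa qb f g) (g', Nalpha qa qb f g') <->
  exists u v, normF f u v != 0 /\ g' = dm (fel u v) g.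
Proof.
split=> [[u [v [N_nz [g'_E _]]]] | [u [v [N_nz ->]]]]; exists u, v; first by [].
by split; last split; rewrite //= /Nalpha dnorm_felM.
Qed.

Lemma dnorm_of_rho_fix1 g c : c != 0 ->
  rho qa qb f (g, c) (done L) = done L -> dnorm g = dscal c.
Proof. by move=> c_nz; rewrite /rho /= muld1 -(dsmul_done c) => <-; rewrite dsmulVK. Qed.

(* Right multiplication by g turns g t \bar g^* = c t into g t c = c t g. *)
Lemma commute_of_rho_fix g c t : c != 0 -> dm (dbarstar g) g = dscal c ->
  rho qa qb f (g, c) t = t -> dm g t = dm t g.
Proof.
move=> c_nz ng /(congr1 (dsmul c)); rewrite /rho /= dsmulVK // => fix_t.
have: dsmul c (dm g t) = dsmul c (dm t g).
  by rewrite -muld_dscal -ng muldA fix_t dsmulAl.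
by move/(can_inj (dsmulK c_nz)).
Qed.

Section FieldE.
Variables (m1 m2 m3 : L).
Let m : quat L := Quat 0 m1 m2 m3.

Definition Eelt u1 v1 u2 v2 : dq L :=
  DQ (Quat u1 (u2 * m1) (u2 * m2) (u2 * m3)) (Quat v1 (v2 * m1) (v2 * m2) (v2 * m3)).

Lemma inE_Eelt g : Defs.inE qa qb f m g <-> exists u1 v1 u2 v2, g = Eelt u1 v1 u2 v2.
Proof. by split=> -[u1 [v1 [u2 [v2 ->]]]]; exists u1, v1, u2, v2; dq_ring. Qed.

Lemma Eelt_mulC u1 v1 u2 v2 w1 w2 w3 w4 :
  dm (Eelt u1 v1 u2 v2) (Eelt w1 w2 w3 w4) = dm (Eelt w1 w2 w3 w4) (Eelt u1 v1 u2 v2).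
Proof. dq_ring. Qed.

Lemma inE_dmul g g' :
  Defs.inE qa qb f m g -> Defs.inE qa qb f m g' -> Defs.inE qa qb f m (dm g g').
Proof.
move=> /inE_Eelt[u1 [v1 [u2 [v2 ->]]]] /inE_Eelt[w1 [w2 [w3 [w4 ->]]]].
pose n := qa * m1 ^+ 2 + qb * m2 ^+ 2 - qa * qb * m3 ^+ 2.
apply/inE_Eelt; exists (u1 * w1 + f * v1 * w2 + n * u2 * w3 + f * n * v2 * w4),
  (u1 * w2 + v1 * w1 + n * (u2 * w4 + v2 * w3)),
  (u1 * w3 + u2 * w1 + f * (v1 * w4 + v2 * w2)), (u1 * w4 + v2 * w1 + v1 * w3 + u2 * w2).
rewrite /n; dq_ring.
Qed.

Lemma E0x_dmul g g' : E0x qa qb f m g -> E0x qa qb f m g' -> E0x qa qb f m (dm g g').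
Proof.
move=> [Eg [[h [Eh [gh hg]]] [c [c_nz ng]]]].
move=> [Eg' [[h' [Eh' [gh' hg']]] [c' [c'_nz ng']]]].
split; first exact: inE_dmul.
split; last by exists (c * c'); rewrite mulf_neq0 // (dnormM_dscal ng ng').
exists (dm h' h); split; first exact: inE_dmul.
by rewrite !muldA -(muldA g g' h') gh' muld1 gh -(muldA h' h g) hg muld1 hg'.
Qed.

Lemma Nalpha_dmul g g' : E0x qa qb f m g -> E0x qa qb f m g' ->
  Nalpha qa qb f (dm g g') = Nalpha qa qb f g * Nalpha qa qb f g'.
Proof.
move=> [_ [_ [c [_ ng]]]] [_ [_ [c' [_ ng']]]].
by rewrite (Nalpha_dscal (dnormM_dscal ng ng')) (Nalpha_dscal ng) (Nalpha_dscal ng').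
Qed.

(* On E the norm N_F(g g^* ) is a quadratic form in the coordinates of g \bar g^*. *)
Lemma normF_nrd_E g c : Defs.inE qa qb f m g -> dnorm g = dscal c ->
  normF f (nrd_u qa qb f g) (nrd_v qa qb f g) = c ^+ 2.
Proof.
pose nq (w : quat L) := qa * q1 w ^+ 2 + qb * q2 w ^+ 2 - qa * qb * q3 w ^+ 2.
pose form (w : dq L) := q0 (dre w) ^+ 2 + f * q0 (Defs.dim w) ^+ 2
  - nq (dre w) - f * nq (Defs.dim w).
move=> /inE_Eelt[u1 [v1 [u2 [v2 ->]]]] ng.
have -> : normF f (nrd_u qa qb f (Eelt u1 v1 u2 v2)) (nrd_v qa qb f (Eelt u1 v1 u2 v2))
          = form (dnorm (Eelt u1 v1 u2 v2)).
  by rewrite /form /nq /normF /nrd_u /nrd_v /=; ring.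
by rewrite ng /form /nq /=; ring.
Qed.

Hypotheses (m_nz : [|| m1 != 0, m2 != 0 | m3 != 0])
  (qa_nz : qa != 0) (qb_nz : qb != 0) (f_nz : f != 0) (two_nz : 2 != 0 :> L).

Lemma inE_of_commute w1 w4 z : w4 != 0 ->
  dm z (Eelt w1 0 0 w4) = dm (Eelt w1 0 0 w4) z -> Defs.inE qa qb f m z.
Proof.
case: z => [[x0 x1 x2 x3] [y0 y1 y2 y3]] w4_nz comm_z.
move: (congr1 (fun t => q1 (Defs.dim t)) comm_z) => /= Ex1.
move: (congr1 (fun t => q2 (Defs.dim t)) comm_z) => /= Ex2.
move: (congr1 (fun t => q3 (Defs.dim t)) comm_z) => /= Ex3.
move: (congr1 (fun t => q1 (dre t)) comm_z) => /= Ey1.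
move: (congr1 (fun t => q2 (dre t)) comm_z) => /= Ey2.
move: (congr1 (fun t => q3 (dre t)) comm_z) => /= Ey3.
have k_nz : 2 * w4 != 0 by rewrite mulf_neq0.
have kf_nz : 2 * w4 * f != 0 by rewrite !mulf_neq0.
have [s [-> -> ->]] : exists s, [/\ x1 = s * m1, x2 = s * m2 & x3 = s * m3].
  apply: colinear_of_cross_eq => //.
  - by apply: (scaled_sub_eq k_nz Ex3); ring.
  - by apply: (scaled_sub_eq (mulf_neq0 k_nz qa_nz) Ex2); ring.
  - by apply: (scaled_sub_eq (mulf_neq0 k_nz qb_nz) Ex1); ring.
have [t [-> -> ->]] : exists t, [/\ y1 = t * m1, y2 = t * m2 & y3 = t * m3].
  apply: colinear_of_cross_eq => //.
  - by apply: (scaled_sub_eq kf_nz Ey3); ring.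
  - by apply: (scaled_sub_eq (mulf_neq0 kf_nz qa_nz) Ey2); ring.
  - by apply: (scaled_sub_eq (mulf_neq0 kf_nz qb_nz) Ey1); ring.
by apply/inE_Eelt; exists x0, y0, s, t.
Qed.

Section Stabilizer.
Variables (dK cc : nat).
Hypothesis delta_E : exists w1 w4, w4 != 0 /\ iota_delta dK cc m = Eelt w1 0 0 w4.

Lemma phi_Hz g : E0x qa qb f m g -> Hz qa qb f dK cc m (g, Nalpha qa qb f g).
Proof.
move=> [Eg [[h [_ [gh hg]]] [c [c_nz ng]]]].
rewrite (Nalpha_dscal ng); split; first by split=> //; exists h.
split; first by rewrite /nu /= (normF_nrd_E Eg ng) mulVf // expf_neq0.
rewrite /rho /= muld1 ng -dsmul_done dsmulK //; split=> //.
have [u1 [v1 [u2 [v2 g_E]]]] := (inE_Eelt g).1 Eg.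
have [w1 [w4 [_ ->]]] := delta_E.
by rewrite g_E Eelt_mulC -muldA -g_E ng muld_dscal dsmulK.
Qed.

Lemma Hz_phi_surj (h : dq L * L) : Hz qa qb f dK cc m h ->
  exists g, E0x qa qb f m g /\ Hequiv qa qb f (g, Nalpha qa qb f g) h.
Proof.
case: h => g c [[[g' [gg' g'g]] c_nz] [_ [fix1 fix_delta]]].
have ng := dnorm_of_rho_fix1 c_nz fix1.
have ng_l : dm (dbarstar g) g = dscal c.
  have barstar_g : dbarstar g = dsmul c g'.
    by rewrite -(mul1d (dbarstar g)) -g'g -muldA ng muld_dscal.
  by rewrite barstar_g dsmulAl g'g dsmul_done.
have g_delta : dm g (iota_delta dK cc m) = dm (iota_delta dK cc m) g.
  exact: commute_of_rho_fix c_nz ng_l fix_delta.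
have [w1 [w4 [w4_nz delta_Eelt]]] := delta_E.
rewrite delta_Eelt in g_delta.
have Eg := inE_of_commute w4_nz g_delta.
have Eg' := inE_of_commute w4_nz (commute_inv gg' g'g g_delta).
exists g; split; first by split=> //; split; [exists g' | exists c].
exists 1, 0; rewrite /normF expr1n expr0n /= mulr0 subr0 oner_neq0 mul1r.
by rewrite (Nalpha_dscal ng) [fel 1 0]/(done L) mul1d.
Qed.

End Stabilizer.
End FieldE.
End QuaternionAlgebra.

Lemma ratr_neq0_pchar0 (L : fieldType) (x : rat) :
  [pchar L] =i pred0 -> x != 0 -> ratr x != 0 :> L.
Proof.
move=> /pcharf0P char0 x_nz.
have intr_nz (z : int) : z != 0 -> z%:~R != 0 :> L.
  case: z => n z_nz; last by rewrite NegzE mulrNz oppr_eq0 [_%:~R]/(n.+1%:R) char0.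
  by rewrite [_%:~R]/(n%:R) char0; apply: contra z_nz => /eqP ->.
by rewrite /ratr mulf_neq0 ?invr_neq0 ?intr_nz ?numq_eq0 ?denq_neq0.
Qed.

Lemma qsqr_neg_pure (R : realFieldType) (a b n : R) (x : quat R) : 0 < n ->
  qmul a b x x = qscal (- n) (qone R) ->
  q0 x = 0 /\ [|| q1 x != 0, q2 x != 0 | q3 x != 0].
Proof.
case: x => x0 x1 x2 x3 /= n_gt0 sqr_x.
move: (congr1 (@q0 R) sqr_x) (congr1 (@q1 R) sqr_x) => /= E0 E1.
move: (congr1 (@q2 R) sqr_x) (congr1 (@q3 R) sqr_x) => /= E2 E3.
have x0_0 : x0 = 0.
  case: (eqVneq x0 0) => // x0_nz; exfalso.
  have k_nz : 2 * x0 != 0 by rewrite mulf_neq0 ?pnatr_eq0.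
  have x1_0 : x1 = 0 by apply: (scaled_sub_eq k_nz E1); ring.
  have x2_0 : x2 = 0 by apply: (scaled_sub_eq k_nz E2); ring.
  have x3_0 : x3 = 0 by apply: (scaled_sub_eq k_nz E3); ring.
  rewrite x1_0 x2_0 x3_0 in E0.
  have : x0 * x0 = - n by rewrite -[RHS]mulr1 -E0; ring.
  nra.
split=> //; apply: contraT.
rewrite !negb_or !negbK => /and3P[/eqP x1_0 /eqP x2_0 /eqP x3_0].
by move: E0; rewrite x0_0 x1_0 x2_0 x3_0 => E0; exfalso; lra.
Qed.

Lemma iota_delta_Eelt (L : fieldType) (dK c : nat) (m1 m2 m3 : L) :
  2 != 0 :> L -> c%:R != 0 :> L ->
  exists w1 w4, w4 != 0 /\ iota_delta dK c (Quat 0 m1 m2 m3) = Eelt m1 m2 m3 w1 0 0 w4.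
Proof.
move=> two_nz c_nz; rewrite /iota_delta /iota_sqrtdK; case: ifP => _.
- exists 2^-1, (2^-1 * c%:R^-1); split; first by rewrite mulf_neq0 // invr_neq0.
  dq_ring.
- exists 0, c%:R^-1; split; first by rewrite invr_neq0.
  dq_ring.
Qed.

Theorem lemma4p1 (a b : rat) (dF dM dK c : nat) (mu : quat rat) :
  a < 0 -> b < 0 ->
  squarefree dF -> squarefree dM -> squarefree dK ->
  (dM * dF = c ^ 2 * dK)%N ->
  qmul a b mu mu = qscal (- (dM%:R)) (qone rat) ->
  forall L : fieldType, [pchar L] =i pred0 ->
  let qa : L := ratr a in let qb : L := ratr b in let f : L := dF%:R in
  let m : quat L := qmap L mu in
  let phi (g : dq L) : dq L * L := (g, Nalpha qa qb f g) in
  (* the map is well defined into H_z *)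
  (forall g, E0x qa qb f m g -> Hz qa qb f dK c m (phi g)) /\
  (* it is a group homomorphism on E_0^x *)
  (forall g g', E0x qa qb f m g -> E0x qa qb f m g' ->
     E0x qa qb f m (dmul qa qb f g g') /\
     Nalpha qa qb f (dmul qa qb f g g') = Nalpha qa qb f g * Nalpha qa qb f g') /\
  (* it induces a well-defined injective map on E_0^x / F^x *)
  (forall g g', E0x qa qb f m g -> E0x qa qb f m g' ->
     (Hequiv qa qb f (phi g) (phi g') <->
      exists u v, normF f u v != 0 /\ g' = dmul qa qb f (fel u v) g)) /\
  (* which is surjective onto H_z *)
  (forall h, Hz qa qb f dK c m h -> exists g, E0x qa qb f m g /\ Hequiv qa qb f (phi g) h).
Proof.
move=> a_lt0 b_lt0 [dF_gt0 _] [dM_gt0 _] _ hc sqr_mu L charL qa qb f m phi.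
have dM_pos : 0 < dM%:R :> rat by rewrite ltr0n.
have [mu0 mu_nz] := qsqr_neg_pure dM_pos sqr_mu.
have /pcharf0P char0 := charL.
have m_pure : m = Quat 0 (ratr (q1 mu)) (ratr (q2 mu)) (ratr (q3 mu)).
  by rewrite /m /qmap mu0 /ratr /= mul0r.
have m_nz : [|| ratr (q1 mu) != 0 :> L, ratr (q2 mu) != 0 :> L | ratr (q3 mu) != 0 :> L].
  by case/or3P: mu_nz => /(ratr_neq0_pchar0 charL) ->; rewrite ?orbT.
have qa_nz : qa != 0 by apply: ratr_neq0_pchar0; rewrite // ltr0_neq0.
have qb_nz : qb != 0 by apply: ratr_neq0_pchar0; rewrite // ltr0_neq0.
have f_nz : f != 0 by rewrite /f char0 -lt0n.
have two_nz : 2 != 0 :> L by rewrite char0.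
have c_nz : c%:R != 0 :> L.
  have : (0 < c ^ 2 * dK)%N by rewrite -hc muln_gt0 dM_gt0.
  by rewrite char0 -lt0n muln_gt0 expn_gt0 orbF => /andP[].
have delta_E :=
  iota_delta_Eelt dK (ratr (q1 mu)) (ratr (q2 mu)) (ratr (q3 mu)) two_nz c_nz.
rewrite m_pure; split; [by move=> g; exact: phi_Hz | split; [|split]].
- by move=> g g' Eg Eg'; split; [exact: E0x_dmul Eg Eg' | exact: Nalpha_dmul Eg Eg'].
- by move=> g g' _ _; exact: Hequiv_phiP.
- by move=> h; exact: Hz_phi_surj.
Qed.
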